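(* Let $V$ be a partially expanded network (as defined in the context) satisfying Properties P1, P2 and P3, with consumption values $q_v$, $v\in V$, given by P3. Suppose the discretized TDASP has a feasible solution. Then the TDASP restricted to $V$ has a feasible solution, and its optimal value (minimum of $\theta_n(t_n)$) is less than or equal to the optimal value of the discretized TDASP.
   Context: Data: activities $1,\dots,n$ with time windows $[e_i,l_i]$, functions $\tau_i$, $\rho_i$, $\theta_i(t)=t+\tau_i(t)$, and a capacity $Q$. Every $\theta_i$ is non-decreasing (FIFO property). Let $\varepsilon>0$ be such that all $e_i,l_i$ are integer multiples of $\varepsilon$, and let $T_i=\{e_i,e_i+\varepsilon,\dots,l_i\}$. The discretized TDASP (fully expanded network) is: choose $t_i\in T_i$ ($1\le i\le n$) minimising $\theta_n(t_n)$ subject to $\theta_i(t_i)\le t_{i+1}$ for $1\le i<n$ and $\sum_{i=1}^n\rho_i(t_i)\le Q$. A partially expanded network is a set $V\subseteq\{(i,t):1\le i\le n,\ t\in T_i\}$. It satisfies Property P1 if $(i,e_i)\in V$ and $(i,l_i)\in V$ for every $i$; Property P2 if for every $(i,t)\in V$ with $i<n$ and $e_{i+1}<\varepsilon\lceil\theta_i(t)/\varepsilon\rceil<l_{i+1}$ we have $(i+1,\varepsilon\lceil\theta_i(t)/\varepsilon\rceil)\in V$; Property P3 if every $(i,t)\in V$ with $t<l_i$ is assigned the value $q_{(i,t)}=\min_{\bar t\in\{t,t+\varepsilon,\dots,t'-\varepsilon\}}\rho_i(\bar t)$ where $t'>t$ is the smallest value with $(i,t')\in V$, and every $(i,l_i)\in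 V$ is assigned $q_{(i,l_i)}=\rho_i(l_i)$. The TDASP restricted to $V$ is: choose $(1,t_1),\dots,(n,t_n)\in V$ minimising $\theta_n(t_n)$ subject to $\theta_i(t_i)\le t_{i+1}$ for $1\le i<n$ and $\sum_{i=1}^n q_{(i,t_i)}\le Q$. *)

From HB Require Import structures.
From mathcomp Require Import all_boot all_order all_algebra.
From mathcomp Require Import reals.
Set Implicit Arguments. Unset Strict Implicit. Unset Printing Implicit Defensive.
Import Order.TTheory GRing.Theory Num.Theory.
Local Open Scope ring_scope.

Section TDASP.
Variable R : realType.

Definition theta (tau : nat -> R -> R) (i : nat) (t : R) : R := t + tau i t.

Definition grid (e l : nat -> R) (eps : R) (i : nat) (t : R) : Prop :=
  exists k : nat, t = e i + k%:R * eps /\ t <= l i.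

Definition ceil_eps (eps x : R) : R := eps * (Num.ceil (x / eps))%:~R.

Definition feasible_full (n : nat) (e l : nat -> R) (eps : R)
    (tau rho : nat -> R -> R) (Q : R) (t : nat -> R) : Prop :=
  (forall i, (1 <= i <= n)%N -> grid e l eps i (t i)) /\
  (forall i, (1 <= i < n)%N -> theta tau i (t i) <= t i.+1) /\
  \sum_(1 <= i < n.+1) rho i (t i) <= Q.

Definition feasible_restricted (n : nat) (V : nat -> R -> Prop)
    (tau q : nat -> R -> R) (Q : R) (t : nat -> R) : Prop :=
  (forall i, (1 <= i <= n)%N -> V i (t i)) /\
  (forall i, (1 <= i < n)%N -> theta tau i (t i) <= t i.+1) /\
  \sum_(1 <= i < n.+1) q i (t i) <= Q.

Definition optimal_value (n : nat) (tau : nat -> R -> R)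
    (feas : (nat -> R) -> Prop) (v : R) : Prop :=
  (exists t, feas t /\ v = theta tau n (t n)) /\
  (forall t, feas t -> v <= theta tau n (t n)).

Definition is_min_on (S : R -> Prop) (f : R -> R) (m : R) : Prop :=
  (exists x, S x /\ m = f x) /\ (forall x, S x -> m <= f x).

Definition partially_expanded (n : nat) (e l : nat -> R) (eps : R)
    (V : nat -> R -> Prop) : Prop :=
  forall i t, V i t -> (1 <= i <= n)%N /\ grid e l eps i t.

Definition P1 (n : nat) (e l : nat -> R) (V : nat -> R -> Prop) : Prop :=
  forall i, (1 <= i <= n)%N -> V i (e i) /\ V i (l i).

Definition P2 (n : nat) (e l : nat -> R) (eps : R) (tau : nat -> R -> R)
    (V : nat -> R -> Prop) : Prop :=
  forall i t, V i t -> (i < n)%N ->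
    e i.+1 < ceil_eps eps (theta tau i t) < l i.+1 ->
    V i.+1 (ceil_eps eps (theta tau i t)).

(* q_(i,t) = min of rho_i over {t, t+eps, ..., t'-eps}, t' the next node of V
   after t in row i; and q_(i,l_i) = rho_i(l_i). *)
Definition P3 (l : nat -> R) (eps : R) (rho : nat -> R -> R)
    (V : nat -> R -> Prop) (q : nat -> R -> R) : Prop :=
  (forall i t, V i t -> t < l i ->
     forall t', V i t' -> t < t' -> (forall s, V i s -> t < s -> t' <= s) ->
     is_min_on (fun tb => exists k : nat, tb = t + k%:R * eps /\ tb <= t' - eps)
               (rho i) (q i t)) /\
  (forall i, V i (l i) -> q i (l i) = rho i (l i)).

End TDASP.

From HB Require Import structures.
From mathcomp Require Import all_boot all_order all_algebra.
From mathcomp Require Import reals.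
From mathcomp Require Import ring lra.
From Stdlib Require Import Classical ClassicalEpsilon.
Import Order.TTheory GRing.Theory Num.Theory.
Local Open Scope ring_scope.

(* Take an optimal solution ts of the discretized problem and round every
   time ts_i DOWN to the largest node s_i of row i of V with s_i <= ts_i
   (it exists by P1 since e_i is a node).  Then:
   - precedence: theta_i(s_i) <= eps*ceil(theta_i(s_i)/eps) <= ts_(i+1),
     and by P1/P2 this rounded value is dominated by a node of row i+1 that is
     still <= ts_(i+1), hence by s_(i+1);
   - consumption: ts_i lies in the block {s_i, ..., t'-eps} of s_i (t' the next
     node), so q_(i,s_i) <= rho_i(ts_i) by P3 (or s_i = ts_i = l_i);
   - objective: theta_n(s_n) <= theta_n(ts_n) by monotonicity (FIFO).
   Both optimal values exist because objective values of feasible solutions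
   are monotone in the grid index of t_n, which is a natural number. *)

Lemma nat_max (P : nat -> Prop) (N : nat) :
  (exists m, P m) -> (forall k, P k -> (k <= N)%N) ->
  exists k, P k /\ forall j, P j -> (j <= k)%N.
Proof.
elim: N => [|N IH] [m Pm] bounded.
  exists 0%N; have := bounded _ Pm; rewrite leqn0 => /eqP m0; subst m.
  by split => // j /bounded.
case: (classic (P N.+1)) => [PN|notPN]; first by exists N.+1.
apply: IH; first by exists m.
move=> k Pk; have := bounded _ Pk; rewrite leq_eqVlt => /orP [/eqP kN|].
  by subst k.
by rewrite ltnS.
Qed.

Lemma nat_min (P : nat -> Prop) (m : nat) : P m ->
  exists k, P k /\ forall j, P j -> (k <= j)%N.
Proof.
elim/ltn_ind: m => m IH Pm.
case: (classic (exists j, (j < m)%N /\ P j)) => [[j [jm Pj]]|none].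
  exact: IH jm Pj.
exists m; split => // j Pj; case: (leqP m j) => // jm.
by exfalso; apply: none; exists j.
Qed.

Section Grid.
Variable R : realType.
Variables (x0 eps : R).
Hypothesis eps_gt0 : 0 < eps.

Definition on_grid (t : R) : Prop := exists k : nat, t = x0 + k%:R * eps.

Lemma grid_le (a b : nat) : (x0 + a%:R * eps <= x0 + b%:R * eps) = (a <= b)%N.
Proof. by rewrite lerD2l ler_pM2r // ler_nat. Qed.

Lemma grid_lt (a b : nat) : (x0 + a%:R * eps < x0 + b%:R * eps) = (a < b)%N.
Proof. by rewrite ltrD2l ltr_pM2r // ltr_nat. Qed.

Lemma grid_bound (t : R) :
  exists N, forall k : nat, x0 + k%:R * eps <= t -> (k <= N)%N.
Proof.
exists (Num.Def.archi_bound (Num.max 0 ((t - x0) / eps))) => k hk.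
have h0 : 0 <= Num.max 0 ((t - x0) / eps) by rewrite le_max lexx.
have hk2 : k%:R <= Num.max 0 ((t - x0) / eps).
  by rewrite le_max; apply/orP; right; rewrite ler_pdivlMr //; lra.
by have := le_lt_trans hk2 (archi_boundP h0); rewrite ltr_nat => /ltnW.
Qed.

Lemma grid_lt_le_pred (a b : nat) :
  (a < b)%N -> x0 + a%:R * eps <= x0 + b%:R * eps - eps.
Proof.
move=> ab; have : (a%:R + 1 <= b%:R :> R) by rewrite -[1]/(1%:R) -natrD ler_nat addn1.
rewrite -subr_ge0 => gap.
have := mulr_ge0 gap (ltW eps_gt0); rewrite mulrBl mulrDl mul1r; lra.
Qed.

Variable W : R -> Prop.
Hypothesis W_grid : forall t, W t -> on_grid t.

Lemma grid_floor (t : R) : W x0 -> x0 <= t ->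
  exists s, [/\ W s, s <= t & forall s', W s' -> s' <= t -> s' <= s].
Proof.
move=> Wx0 x0t; have [N hN] := grid_bound t.
have [|k [[Wk kt] kmax]] :=
  nat_max (fun k => W (x0 + k%:R * eps) /\ x0 + k%:R * eps <= t) N _
    (fun k hk => hN k hk.2).
  by exists 0%N; rewrite mul0r addr0.
exists (x0 + k%:R * eps); split => // s' Ws' s't.
have [k' hk'] := W_grid _ Ws'.
by rewrite hk' grid_le; apply: kmax; rewrite -hk'.
Qed.

Lemma grid_succ (s y : R) : W y -> s < y ->
  exists t', [/\ W t', s < t' & forall s', W s' -> s < s' -> t' <= s'].
Proof.
move=> Wy sy; have [c hc] := W_grid _ Wy.
have [|k [[Wk sk] kmin]] :=
  nat_min (fun k => W (x0 + k%:R * eps) /\ s < x0 + k%:R * eps) c _.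
  by rewrite -hc.
exists (x0 + k%:R * eps); split => // s' Ws' ss'.
have [k' hk'] := W_grid _ Ws'.
by rewrite hk' grid_le; apply: kmin; rewrite -hk'.
Qed.

End Grid.
Arguments on_grid {R}.
Arguments grid_le {R} x0 {eps}.
Arguments grid_lt {R} x0 {eps}.
Arguments grid_lt_le_pred {R x0 eps} eps_gt0 {a b}.
Arguments grid_floor {R x0 eps} eps_gt0 {W} W_grid {t}.
Arguments grid_succ {R x0 eps} eps_gt0 {W} W_grid {s y}.

Lemma ceil_eps_between (R : realType) (eps x : R) (z : int) :
  0 < eps -> x <= z%:~R * eps -> x <= ceil_eps eps x <= z%:~R * eps.
Proof.
move=> eps_gt0 xz; rewrite /ceil_eps !(mulrC eps) -ler_pdivrMr // ceil_ge /=.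
by rewrite ler_pM2r // ler_int ceil_le_int // ler_pdivrMr.
Qed.
Arguments ceil_eps_between {R eps x z}.

Lemma optimal_value_exists (R : realType) (n : nat) (e : nat -> R) (eps : R)
    (tau : nat -> R -> R) (F : (nat -> R) -> Prop) :
  0 < eps ->
  (forall x y, x <= y -> theta tau n x <= theta tau n y) ->
  (forall t, F t -> on_grid (e n) eps (t n)) ->
  (exists t, F t) ->
  exists v, optimal_value n tau F v.
Proof.
move=> eps_gt0 mono F_grid [t0 Ft0]; have [k0 hk0] := F_grid _ Ft0.
have [k [[t [Ft tn]] kmin]] :=
  nat_min (fun k => exists t, F t /\ t n = e n + k%:R * eps) k0
    (ex_intro _ t0 (conj Ft0 hk0)).
exists (theta tau n (t n)); split; first by exists t.
move=> t' Ft'; apply: mono; have [k' hk'] := F_grid _ Ft'.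
by rewrite tn hk' grid_le //; apply: kmin; exists t'.
Qed.
Arguments optimal_value_exists {R n e eps tau F}.

Lemma feasible_full_on_grid (R : realType) (n : nat) (e l : nat -> R) (eps : R)
    (tau rho : nat -> R -> R) (Q : R) (t : nat -> R) :
  (0 < n)%N -> feasible_full n e l eps tau rho Q t -> on_grid (e n) eps (t n).
Proof.
move=> n_gt0 [t_grid _]; have [|k [tk _]] := t_grid n; last by exists k.
by rewrite n_gt0 leqnn.
Qed.
Arguments feasible_full_on_grid {R n e l eps tau rho Q t}.

Section RoundDown.
Variable R : realType.
Variables (n : nat) (e l : nat -> R) (eps : R) (tau rho : nat -> R -> R).
Variables (V : nat -> R -> Prop) (q : nat -> R -> R).
Hypothesis eps_gt0 : 0 < eps.
Hypothesis V_expanded : partially_expanded n e l eps V.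
Hypothesis V_P1 : P1 n e l V.
Hypothesis V_P2 : P2 n e l eps tau V.
Hypothesis V_P3 : P3 l eps rho V q.

Variable ts : nat -> R.
Hypothesis ts_grid : forall i, (1 <= i <= n)%N -> grid e l eps i (ts i).

Definition floor_node (i : nat) (s : R) : Prop :=
  [/\ V i s, s <= ts i & forall s', V i s' -> s' <= ts i -> s' <= s].

Lemma row_on_grid (i : nat) (t : R) : V i t -> on_grid (e i) eps t.
Proof. by move=> /V_expanded [_ [k [-> _]]]; exists k. Qed.

(* Rounding down is possible since e_i is a node (P1) and e_i <= ts_i. *)
Lemma floor_node_exists (i : nat) : (1 <= i <= n)%N -> exists s, floor_node i s.
Proof.
move=> hi; have [k [ts_k _]] := ts_grid _ hi.
apply: (grid_floor eps_gt0 (row_on_grid i)); first exact: (V_P1 _ hi).1.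
by rewrite ts_k lerDl mulr_ge0 // ltW.
Qed.

Lemma floor_nodes :
  exists s : nat -> R, forall i, (1 <= i <= n)%N -> floor_node i (s i).
Proof.
have hs i : exists s, (1 <= i <= n)%N -> floor_node i s.
  case hi: (1 <= i <= n)%N; last by exists 0.
  by have [s fs] := floor_node_exists _ hi; exists s.
exists (fun i => proj1_sig (constructive_indefinite_description _ (hs i))).
by move=> i; exact: (proj2_sig (constructive_indefinite_description _ (hs i))).
Qed.

(* ts_i lies in the block {s_i, ..., t' - eps} of its rounded-down node s_i,
   so the consumption value q_(i,s_i) given by P3 is at most rho_i(ts_i). *)
Lemma floor_node_consumption (i : nat) (s : R) :
  (1 <= i <= n)%N -> floor_node i s -> q i s <= rho i (ts i).
Proof.
move: V_P3 => [q_block q_last] hi [Vs sts smax].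
have [_ [a [ha sl]]] := V_expanded _ _ Vs.
have [b [hb tl]] := ts_grid _ hi.
case: (ltrP s (l i)) => [s_lt_l|l_le_s]; last first.
  have sll : s = l i by apply/eqP; rewrite eq_le sl l_le_s.
  have tll : ts i = l i by apply/eqP; rewrite eq_le tl (le_trans l_le_s sts).
  by rewrite tll sll q_last // -sll.
have [t' [Vt' st' t'min]] :=
  grid_succ eps_gt0 (row_on_grid i) (V_P1 _ hi).2 s_lt_l.
have [_ hmin] := q_block i s Vs s_lt_l t' Vt' st' t'min; apply: hmin.
have [c hc] := row_on_grid _ _ Vt'.
have ab : (a <= b)%N by rewrite -(grid_le (e i) eps_gt0) -ha -hb.
have bc : (b < c)%N.
  rewrite -(grid_lt (e i) eps_gt0) -hb -hc ltNge; apply/negP => t'ts.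
  by have := lt_le_trans st' (smax _ Vt' t'ts); rewrite ltxx.
exists (b - a)%N; split; first by rewrite hb ha natrB //; ring.
by rewrite hb hc grid_lt_le_pred.
Qed.

(* Rounding down preserves precedence constraints: the eps-ceiling of
   theta_i(s_i) is either at most e_(i+1), a node by P2, or at least l_(i+1);
   in each case a node of row i+1 that is <= ts_(i+1) dominates it. *)
Lemma floor_node_precedence (i : nat) (s s1 : R) :
  (forall x y, x <= y -> theta tau i x <= theta tau i y) ->
  (exists z : int, e i.+1 = z%:~R * eps) ->
  (1 <= i < n)%N -> theta tau i (ts i) <= ts i.+1 ->
  floor_node i s -> floor_node i.+1 s1 ->
  theta tau i s <= s1.
Proof.
move=> mono [z hz] /andP[i1 iltn] prec [Vs sts _] [_ _ s1max].
have hi1 : (1 <= i.+1 <= n)%N by rewrite iltn.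
have [b [hb tl]] := ts_grid _ hi1.
set x := theta tau i s.
have xts : x <= ts i.+1 := le_trans (mono _ _ sts) prec.
have tsz : ts i.+1 = (z + b%:Z)%:~R * eps by rewrite hb hz intrD mulrDl.
have xz : x <= (z + b%:Z)%:~R * eps by rewrite -tsz.
have /andP[xc cz] := ceil_eps_between eps_gt0 xz.
have cts : ceil_eps eps x <= ts i.+1 by rewrite tsz.
apply: le_trans xc _.
case: (lerP (ceil_eps eps x) (e i.+1)) => [c_le_e|e_lt_c].
  apply: le_trans c_le_e (s1max _ (V_P1 _ hi1).1 _).
  by rewrite hb lerDl mulr_ge0 // ltW.
case: (ltrP (ceil_eps eps x) (l i.+1)) => [c_lt_l|l_le_c].
  by apply: s1max cts; apply: V_P2 => //; rewrite e_lt_c c_lt_l.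
exact: le_trans (le_trans cts tl) (s1max _ (V_P1 _ hi1).2 (le_trans l_le_c cts)).
Qed.

Lemma floor_nodes_feasible (Q : R) (s : nat -> R) :
  (forall i, (1 <= i <= n)%N ->
     forall x y, x <= y -> theta tau i x <= theta tau i y) ->
  (forall i, (1 <= i <= n)%N -> exists z : int, e i = z%:~R * eps) ->
  feasible_full n e l eps tau rho Q ts ->
  (forall i, (1 <= i <= n)%N -> floor_node i (s i)) ->
  feasible_restricted n V tau q Q s.
Proof.
move=> mono e_int [_ [ts_prec ts_sum]] s_floor.
split; first by move=> i /s_floor [].
split.
  move=> i hi; have /andP[i1 iltn] := hi.
  have hi' : (1 <= i <= n)%N by rewrite i1 ltnW.
  have hi1 : (1 <= i.+1 <= n)%N by rewrite iltn.
  exact: floor_node_precedence (mono i hi') (e_int _ hi1) hi (ts_prec i hi)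
    (s_floor i hi') (s_floor i.+1 hi1).
apply: le_trans ts_sum; apply: ler_sum_nat => i /andP[i1 i2].
have hi : (1 <= i <= n)%N by rewrite i1 -ltnS.
exact: floor_node_consumption hi (s_floor i hi).
Qed.

End RoundDown.
Arguments row_on_grid {R n e l eps V}.
Arguments floor_nodes {R n e l eps V}.
Arguments floor_nodes_feasible {R n e l eps tau rho V q}.

Theorem lemma3 (R : realType) (n : nat) (e l : nat -> R) (eps : R)
    (tau rho : nat -> R -> R) (Q : R) (V : nat -> R -> Prop) (q : nat -> R -> R) :
  (0 < n)%N ->
  0 < eps ->
  (forall i, (1 <= i <= n)%N ->
     (exists z : int, e i = z%:~R * eps) /\ (exists z : int, l i = z%:~R * eps)) ->
  (forall i, (1 <= i <= n)%N -> forall x y : R, x <= y -> theta tau i x <= theta tau i y) ->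
  partially_expanded n e l eps V ->
  P1 n e l V ->
  P2 n e l eps tau V ->
  P3 l eps rho V q ->
  (exists t, feasible_full n e l eps tau rho Q t) ->
  exists vV vD : R,
    optimal_value n tau (feasible_restricted n V tau q Q) vV /\
    optimal_value n tau (feasible_full n e l eps tau rho Q) vD /\
    vV <= vD.
Proof.
move=> n_gt0 eps_gt0 lattice mono V_exp V_P1 V_P2 V_P3 feasD.
have hn : (1 <= n <= n)%N by rewrite n_gt0 leqnn.
have [vD [[ts [Fts ->]] optD]] :=
  optimal_value_exists eps_gt0 (mono n hn)
    (fun _ => feasible_full_on_grid n_gt0) feasD.
have [ts_grid _] := Fts.
have [s s_floor] := floor_nodes eps_gt0 V_exp V_P1 ts ts_grid.
have e_int i : (1 <= i <= n)%N -> exists z : int, e i = z%:~R * eps.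
  by move=> /lattice [].
have Fs : feasible_restricted n V tau q Q s :=
  floor_nodes_feasible eps_gt0 V_exp V_P1 V_P2 V_P3 ts ts_grid Q s mono e_int Fts s_floor.
have restricted_on_grid t :
    feasible_restricted n V tau q Q t -> on_grid (e n) eps (t n).
  by move=> [V_t _]; exact: row_on_grid V_exp _ _ (V_t n hn).
have [vV optV] :=
  optimal_value_exists eps_gt0 (mono n hn) restricted_on_grid (ex_intro _ s Fs).
exists vV, (theta tau n (ts n)); split => //; split; first by split; [exists ts|].
apply: le_trans (optV.2 s Fs) _; apply: (mono n hn).
by have [_ ? _] := s_floor n hn.
Qed.
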